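(* In the setting below, fix $m\ge2$, $p=1$ and the item parameters $\beta^*$, and let the number of users $n\to\infty$ with user parameters $\theta^*_1,\dots,\theta^*_n$ (possibly depending on $n$) such that $\gamma\ge\gamma_0$ for all $n$, for some constant $\gamma_0>0$ independent of $n$. Then the output $\beta$ of the spectral algorithm is a consistent estimator of $\beta^*$: for every $\epsilon>0$, $$\lim_{n\to\infty}\Pr\big(\|\beta-\beta^*\|_2<\epsilon\big)=1 .$$
   Context: Setting. Let $n\ge1$ (number of users) and $m\ge2$ (number of items). Fix user parameters $\theta^*_1,\dots,\theta^*_n\in\mathbb R$ and item parameters $\beta^*_1,\dots,\beta^*_m\in\mathbb R$ normalized so that $\sum_{i=1}^m\beta^*_i=0$. Write $w^*_i=e^{\beta^*_i}$, $\kappa=\max_i\beta^*_i-\min_i\beta^*_i$, and $\pi^*_i=w^*_i/\sum_{k=1}^m w^*_k$. Random sampling scheme: the assignment matrix $A\in\{0,1\}^{n\times m}$ has i.i.d. Bernoulli$(p)$ entries, $p\in(0,1]$; independently of $A$, the responses $X_{li}\in\{0,1\}$ ($l\in[n]$, $i\in[m]$) are independent with $\Pr(X_{li}=1)=e^{\theta^*_l}/(e^{\theta^*_l}+e^{\beta^*_i})$ (only responses with $A_{li}=1$ are used). Let $\gamma=\min_{l\in[n],\,i\ne j\in[m]}\mathbb E[X_{li}(1-X_{lj})]$. Let $B=A^\top A$ and $d=\frac32 mnp^2$. Define $m\times m$ matrices $P,P^*$ by, for $i\neq j$, $P_{ij}=\frac1d\sum_{l=1}^nA_{li}A_{lj}X_{li}(1-X_{lj})$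 and $P^*_{ij}=\frac1d\sum_{l=1}^nA_{li}A_{lj}\mathbb E[X_{li}(1-X_{lj})]$, and $P_{ii}=1-\sum_{k\ne i}P_{ik}$, $P^*_{ii}=1-\sum_{k\ne i}P^*_{ik}$. Spectral algorithm: compute a stationary distribution $\pi$ of $P$ (a probability vector with $\pi^\top P=\pi^\top$) and output $\beta\in\mathbb R^m$ with $\beta_i=\log\pi_i-\frac1m\sum_{k=1}^m\log\pi_k$. $\|\cdot\|_2$ denotes the Euclidean norm of vectors. *)

From HB Require Import structures.
From mathcomp Require Import all_boot all_order all_algebra.
From mathcomp Require Import all_classical all_reals all_analysis.
Set Implicit Arguments. Unset Strict Implicit. Unset Printing Implicit Defensive.
Import Order.TTheory GRing.Theory Num.Theory.
Local Open Scope ring_scope.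

Section Spectral.
Variable R : realType.

(* Pr(X_li = 1) = e^theta / (e^theta + e^beta) *)
Definition rasch_q (th b : R) : R := expR th / (expR th + expR b).

(* E[X_li (1 - X_lj)] for i <> j (independent responses); gamma is the
   minimum of these over l and i <> j. *)
Definition pair_mean (n m : nat) (theta : 'I_n -> R) (beta : 'I_m -> R)
  (l : 'I_n) (i j : 'I_m) : R :=
  rasch_q (theta l) (beta i) * (1 - rasch_q (theta l) (beta j)).

(* outcome of the random experiment: assignment matrix A and responses X *)
Definition outcome (n m : nat) : finType :=
  ({ffun 'I_n * 'I_m -> bool} * {ffun 'I_n * 'I_m -> bool})%type.

(* probability weight of an outcome: A_li iid Bernoulli(p), X_li independent
   Bernoulli(rasch_q), A independent of X *)
Definition outcome_weight (n m : nat) (theta : 'I_n -> R) (beta : 'I_m -> R)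
  (p : R) (w : outcome n m) : R :=
  (\prod_(li : 'I_n * 'I_m) (if w.1 li then p else 1 - p)) *
  (\prod_(li : 'I_n * 'I_m)
      (if w.2 li then rasch_q (theta li.1) (beta li.2)
       else 1 - rasch_q (theta li.1) (beta li.2))).

Definition b2R (b : bool) : R := if b then 1 else 0.

Definition spec_P (n m : nat) (p : R) (A X : {ffun 'I_n * 'I_m -> bool})
  : 'M[R]_m :=
  let d := 3 / 2 * m%:R * n%:R * p ^+ 2 in
  let off := fun i j : 'I_m =>
     d^-1 * \sum_(l < n) b2R (A (l, i)) * b2R (A (l, j)) *
                         b2R (X (l, i)) * (1 - b2R (X (l, j))) in
  \matrix_(i, j) (if i == j then 1 - \sum_(k < m | k != i) off i k
                  else off i j).

Definition stationary (m : nat) (P : 'M[R]_m) (pi : 'rV[R]_m) : Prop :=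
  (forall i, 0 <= pi 0 i) /\ \sum_i pi 0 i = 1 /\ pi *m P = pi.

Definition spec_beta (m : nat) (pi : 'rV[R]_m) (i : 'I_m) : R :=
  ln (pi 0 i) - m%:R^-1 * \sum_(k < m) ln (pi 0 k).

Definition dist2 (m : nat) (u v : 'I_m -> R) : R :=
  Num.sqrt (\sum_(i < m) (u i - v i) ^+ 2).

(* success event: every stationary distribution pi of P is entrywise
   positive (so log pi is defined) and the resulting beta is eps-close *)
Definition success (n m : nat) (beta : 'I_m -> R) (p eps : R)
  (w : outcome n m) : Prop :=
  forall pi : 'rV[R]_m, stationary (spec_P p w.1 w.2) pi ->
    (forall i, 0 < pi 0 i) /\ dist2 (spec_beta pi) beta < eps.

Definition success_prob (n m : nat) (theta : 'I_n -> R) (beta : 'I_m -> R)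
  (p eps : R) : R :=
  \sum_(w : outcome n m | `[< success beta p eps w >]) outcome_weight theta beta p w.

End Spectral.

(* With p = 1 every user answers every item, so P is an average of n independent
   bounded matrices whose mean P* is reversible with respect to the softmax pi* of
   beta*, with off-diagonal entries at least gamma0 / (3m/2) whatever n is.  By
   Chebyshev's inequality each entry of P - P* is below delta except with
   probability O(1 / (n delta^2)).  For a chain that close to P*, comparing the
   balance equations of P and P* at the state maximising pi_i / pi*_i shows that all
   these ratios are within O(delta) of 1; taking logarithms then bounds
   ||beta - beta*|| by O(sqrt(m) delta). *)

From HB Require Import structures.
From mathcomp Require Import all_boot all_order all_algebra.
From mathcomp Require Import all_classical all_reals all_analysis.
From mathcomp Require Import ring lra.
Import Order.TTheory GRing.Theory Num.Theory numFieldNormedType.Exports.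
Set Implicit Arguments. Unset Strict Implicit. Unset Printing Implicit Defensive.
Local Open Scope classical_set_scope.
Local Open Scope ring_scope.

Section BernoulliExpectation.
Variables (R : realType) (T : finType) (q : T -> R).

Definition bweight (x : {ffun T -> bool}) : R :=
  \prod_t (if x t then q t else 1 - q t).

Definition expect (f : {ffun T -> bool} -> R) : R := \sum_x bweight x * f x.

Lemma eq_expect f g : f =1 g -> expect f = expect g.
Proof. by move=> fg; apply: eq_bigr => x _; rewrite fg. Qed.

Lemma expectD f g : expect (fun x => f x + g x) = expect f + expect g.
Proof. by rewrite -big_split; apply: eq_bigr => x _; rewrite mulrDr. Qed.

Lemma expectB f g : expect (fun x => f x - g x) = expect f - expect g.
Proof. by rewrite -sumrB; apply: eq_bigr => x _; rewrite mulrBr. Qed.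

Lemma expectZ c f : expect (fun x => c * f x) = c * expect f.
Proof. by rewrite mulr_sumr; apply: eq_bigr => x _; rewrite mulrCA. Qed.

Lemma expect_sum (I : finType) (f : I -> {ffun T -> bool} -> R) :
  expect (fun x => \sum_i f i x) = \sum_i expect (f i).
Proof. by rewrite exchange_big; apply: eq_bigr => x _; rewrite mulr_sumr. Qed.

Lemma expect_prod (F : T -> bool -> R) :
  expect (fun x => \prod_t F t (x t)) =
  \prod_t (q t * F t true + (1 - q t) * F t false).
Proof.
rewrite (eq_bigr (fun t => \sum_(b : bool) (if b then q t else 1 - q t) * F t b));
  last by move=> t _; rewrite big_bool.
by rewrite bigA_distr_bigA; apply: eq_bigr => x _; rewrite -big_split.
Qed.

Lemma expect_cst c : expect (fun=> c) = c.
Proof.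
transitivity (expect (fun x => c * \prod_t (fun _ _ => 1) t (x t))).
  by apply: eq_expect => x; rewrite big1 ?mulr1.
by rewrite expectZ (expect_prod (fun _ _ => 1)) big1 ?mulr1 // => t _; ring.
Qed.

Hypothesis q01 : forall t, 0 <= q t <= 1.

Lemma ler_expect f g : (forall x, f x <= g x) -> expect f <= expect g.
Proof.
move=> fg; apply: ler_sum => x _; apply: ler_wpM2l (fg x).
by apply: prodr_ge0 => t _; have /andP[] := q01 t; case: (x t); lra.
Qed.

End BernoulliExpectation.

Section Rasch.
Variable R : realType.

Lemma rasch_q_itv (th b : R) : 0 < rasch_q th b < 1.
Proof.
have e_th := expR_gt0 th; have e_b := expR_gt0 b.
by rewrite divr_gt0 ?addr_gt0 //= ltr_pdivrMr ?addr_gt0 //; lra.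
Qed.

Lemma rasch_qC (th b : R) : 1 - rasch_q th b = expR b / (expR th + expR b).
Proof.
have e_th := expR_gt0 th; have e_b := expR_gt0 b.
by rewrite /rasch_q; field; rewrite gt_eqF // addr_gt0.
Qed.

Variables (n m : nat) (theta : 'I_n -> R) (beta : 'I_m -> R).

Lemma pair_mean_itv l i j : 0 <= pair_mean theta beta l i j <= 1.
Proof.
have /andP[? ?] := rasch_q_itv (theta l) (beta i).
have /andP[? ?] := rasch_q_itv (theta l) (beta j).
by rewrite /pair_mean; apply/andP; split; nra.
Qed.

Lemma expR_pair_meanC l i j :
  expR (beta i) * pair_mean theta beta l i j =
  expR (beta j) * pair_mean theta beta l j i.
Proof.
rewrite /pair_mean !rasch_qC /rasch_q.
have := expR_gt0 (theta l); have := expR_gt0 (beta i); have := expR_gt0 (beta j).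
by move=> *; field; rewrite !gt_eqF ?addr_gt0.
Qed.

Definition rasch_prob (t : 'I_n * 'I_m) : R := rasch_q (theta t.1) (beta t.2).

Lemma rasch_prob_itv t : 0 <= rasch_prob t <= 1.
Proof. by have /andP[] := rasch_q_itv (theta t.1) (beta t.2); rewrite /rasch_prob; lra. Qed.

End Rasch.

Section PairDeviation.
Variables (R : realType) (n m : nat) (theta : 'I_n -> R) (beta : 'I_m -> R).
Variables (i j : 'I_m).
Hypothesis ij : i != j.

Definition pair_resp (l : 'I_n) (x : {ffun 'I_n * 'I_m -> bool}) : R :=
  b2R R (x (l, i)) * (1 - b2R R (x (l, j))).

Definition pair_dev (x : {ffun 'I_n * 'I_m -> bool}) : R :=
  \sum_l (pair_resp l x - pair_mean theta beta l i j).

Lemma pair_resp_itv l x : 0 <= pair_resp l x <= 1.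
Proof. by rewrite /pair_resp /b2R; case: (x (l, i)); case: (x (l, j)); lra. Qed.

Lemma prod_pair_cells (G : 'I_n * 'I_m -> R) (L : pred 'I_n) :
  (forall t, ~~ L t.1 -> G t = 1) ->
  (forall t, t.2 != i -> t.2 != j -> G t = 1) ->
  \prod_t G t = \prod_(l | L l) (G (l, i) * G (l, j)).
Proof.
move=> GL Gij; rewrite (eq_bigr (fun t => G (t.1, t.2))); last by case.
rewrite -(pair_bigA _ (fun l k => G (l, k))) [RHS]big_mkcond; apply: eq_bigr => l _.
case: ifP => Ll; last by rewrite big1 // => k _; apply: GL; rewrite /= Ll.
rewrite (bigD1 i) //= (bigD1 j) 1?eq_sym //= big1 ?mulr1 // => k /andP[ki kj].
exact: Gij.
Qed.

Lemma expect_prod_pair_resp (L : pred 'I_n) :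
  expect (rasch_prob theta beta) (fun x => \prod_(l | L l) pair_resp l x) =
  \prod_(l | L l) pair_mean theta beta l i j.
Proof.
(* [F] spreads [pair_resp] over the cells of the rows in [L], so that
   [expect_prod] factorises it. *)
pose F (t : 'I_n * 'I_m) (b : bool) : R :=
  if L t.1 then if t.2 == i then b2R R b else if t.2 == j then 1 - b2R R b else 1
  else 1.
have FL t b : ~~ L t.1 -> F t b = 1 by rewrite /F => /negbTE ->.
have Fij t b : t.2 != i -> t.2 != j -> F t b = 1.
  by rewrite /F => /negbTE -> /negbTE ->; case: ifP.
have Fi l b : L l -> F (l, i) b = b2R R b by rewrite /F /= => ->; rewrite eqxx.
have Fj l b : L l -> F (l, j) b = 1 - b2R R b.
  by rewrite /F /= eq_sym (negbTE ij) eqxx => ->.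
transitivity (expect (rasch_prob theta beta) (fun x => \prod_t F t (x t))).
  apply: eq_expect => x.
  rewrite (prod_pair_cells (fun t => FL t (x t)) (fun t => Fij t (x t))).
  by apply: eq_bigr => l Ll; rewrite Fi ?Fj.
rewrite expect_prod (prod_pair_cells (L := L)); last 2 first.
- by move=> t Lt; rewrite !FL //; ring.
- by move=> t ti tj; rewrite !Fij //; ring.
apply: eq_bigr => l Ll; rewrite !Fi ?Fj // /b2R /pair_mean /rasch_prob /=; ring.
Qed.

Lemma expect_pair_resp l :
  expect (rasch_prob theta beta) (pair_resp l) = pair_mean theta beta l i j.
Proof.
have := expect_prod_pair_resp (pred1 l); rewrite big_pred1_eq => <-.
by apply: eq_expect => x; rewrite big_pred1_eq.
Qed.

Lemma expect_pair_respM l l' : l != l' ->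
  expect (rasch_prob theta beta) (fun x => pair_resp l x * pair_resp l' x) =
  pair_mean theta beta l i j * pair_mean theta beta l' i j.
Proof.
move=> ll'; have prod2 (F : 'I_n -> R) :
    \prod_(k | (k == l) || (k == l')) F k = F l * F l'.
  rewrite (bigD1 l) ?eqxx //= (big_pred1 l') // => k /=.
  by case: (eqVneq k l) => [->|]; rewrite ?(negbTE ll') ?andbT.
have := expect_prod_pair_resp [pred k | (k == l) || (k == l')].
by rewrite /= prod2 => <-; apply: eq_expect => x; rewrite prod2.
Qed.

Lemma expect_pair_dev_sqr_le :
  expect (rasch_prob theta beta) (fun x => pair_dev x ^+ 2) <= n%:R.
Proof.
pose mu l := pair_mean theta beta l i j.
pose c l x := pair_resp l x - mu l.
have cov l l' : l != l' -> expect (rasch_prob theta beta) (fun x => c l x * c l' x) = 0.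
  move=> ll'; rewrite (@eq_expect _ _ _ _ (fun x => pair_resp l x * pair_resp l' x
      + (- mu l') * pair_resp l x + (- mu l) * pair_resp l' x + mu l * mu l')).
    rewrite !expectD !expectZ expect_cst expect_pair_respM // !expect_pair_resp.
    by rewrite /mu /pair_mean; ring.
  by move=> x; rewrite /c; ring.
have var l : expect (rasch_prob theta beta) (fun x => c l x * c l x) <= 1.
  rewrite -[1](expect_cst (rasch_prob theta beta)); apply: ler_expect => [t|x].
    exact: rasch_prob_itv.
  have /andP[] := pair_resp_itv l x; have /andP[] := pair_mean_itv theta beta l i j.
  by rewrite /c /mu; nra.
rewrite (@eq_expect _ _ _ _ (fun x => \sum_l \sum_l' c l x * c l' x)); last first.
  by move=> x; rewrite /pair_dev expr2 mulr_suml; apply: eq_bigr => l _; rewrite mulr_sumr.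
rewrite expect_sum -[n in n%:R]card_ord -sumr_const; apply: ler_sum => l _.
by rewrite expect_sum (bigD1 l) //= big1 ?addr0 // => l' l'l; apply: cov; rewrite eq_sym.
Qed.

Lemma chebyshev_pair_dev (a : R) : 0 < a ->
  expect (rasch_prob theta beta) (fun x => if a <= `|pair_dev x| then 1 else 0)
  <= n%:R / a ^+ 2.
Proof.
move=> a_gt0; have a2_gt0 : 0 < a ^+ 2 by rewrite exprn_gt0.
apply: le_trans (_ : expect (rasch_prob theta beta)
                       (fun x => (a ^+ 2)^-1 * pair_dev x ^+ 2) <= _).
  apply: ler_expect => [t|x]; first exact: rasch_prob_itv.
  rewrite ler_pdivlMl //; case: ifP => [ha|_]; last by rewrite mulr0 sqr_ge0.
  by rewrite mulr1 -[X in _ <= X]real_normK ?num_real // lerXn2r ?nnegrE // ltW.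
by rewrite expectZ mulrC ler_pM2r ?invr_gt0 // expect_pair_dev_sqr_le.
Qed.

End PairDeviation.

Lemma stationary_balance (R : realType) (m : nat) (P : 'M[R]_m) (pi : 'rV[R]_m) j :
  (forall i, P i i = 1 - \sum_(k | k != i) P i k) -> pi *m P = pi ->
  \sum_(i | i != j) pi 0 i * P i j = pi 0 j * \sum_(k | k != j) P j k.
Proof.
move=> P_diag pi_st; have := congr1 (fun M : 'rV[R]_m => M 0 j) pi_st.
by rewrite /= mxE (bigD1 j) //= P_diag mulrBr mulr1; lra.
Qed.

Section Perturbation.
Variables (R : realType) (m : nat) (P : 'M[R]_m) (Q : 'I_m -> 'I_m -> R).
Variables (ps : 'I_m -> R) (pi : 'rV[R]_m) (c q0 dl : R).
Hypotheses (ps_gt0 : forall i, 0 < ps i) (ps_sum1 : \sum_i ps i = 1).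
Hypotheses (ps_ge : forall i, c <= ps i) (c_gt0 : 0 < c).
Hypotheses (Q_ge : forall i j, i != j -> q0 <= Q i j) (q0_gt0 : 0 < q0).
Hypothesis Q_rev : forall i j, ps i * Q i j = ps j * Q j i.
Hypothesis P_diag : forall i, P i i = 1 - \sum_(k | k != i) P i k.
Hypotheses (PQ : forall i j, i != j -> `|P i j - Q i j| <= dl) (dl_ge0 : 0 <= dl).
Hypothesis pi_st : stationary P pi.

Let r i := pi 0 i / ps i.

Let pi_ratio i : pi 0 i = ps i * r i.
Proof. by rewrite /r mulrC divfK // gt_eqF. Qed.

Let ps_ratio_sum : \sum_i ps i * r i = 1.
Proof. by case: pi_st => _ [<- _]; apply: eq_bigr => i _; rewrite pi_ratio. Qed.

(* Reversibility of Q turns the balance equation of P at j into a net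
   Q-flow into j that is bounded by the perturbation P - Q. *)
Lemma flow_bound j :
  \sum_(i | i != j) ps i * Q i j * (r j - r i) <= (m%:R + 1) * dl.
Proof.
case: pi_st => pi_ge0 [pi_sum1 piP].
have balance := @stationary_balance _ _ P pi j P_diag piP.
have -> : \sum_(i | i != j) ps i * Q i j * (r j - r i) =
    \sum_(i | i != j) (pi 0 j * (Q j i - P j i) + pi 0 i * (P i j - Q i j)).
  rewrite [RHS](eq_bigr (fun i => (pi 0 j * Q j i - pi 0 i * Q i j) +
                             (pi 0 i * P i j - pi 0 j * P j i))); last first.
    by move=> i _; ring.
  have net0 : \sum_(i | i != j) (pi 0 i * P i j - pi 0 j * P j i) = 0.
    by rewrite sumrB balance mulr_sumr subrr.
  rewrite big_split /= net0 addr0.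
  by apply: eq_bigr => i _; rewrite !pi_ratio mulrBr {1}Q_rev; ring.
apply: le_trans (_ : \sum_i (pi 0 j * dl + pi 0 i * dl) <= _).
  rewrite [X in _ <= X](bigD1 j) //= ler_wpDl ?addr_ge0 ?mulr_ge0 //.
  apply: ler_sum => i ij; apply: lerD; apply: ler_wpM2l => //.
    by rewrite (le_trans (ler_norm _)) // distrC PQ // eq_sym.
  exact: le_trans (ler_norm _) (PQ ij).
rewrite big_split /= sumr_const card_ord -mulr_suml pi_sum1 mul1r -mulr_natr.
have pij_le1 : pi 0 j <= 1.
  by rewrite -pi_sum1 (bigD1 j) //= ler_wpDr // sumr_ge0.
have : 0 <= dl * m%:R * (1 - pi 0 j) by rewrite !mulr_ge0 ?subr_ge0.
nra.
Qed.

Lemma max_ratio_gap i j : (forall k, r k <= r j) ->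
  r j - r i <= (m%:R + 1) * dl / (c * q0).
Proof.
move=> j_max; have cq0_gt0 : 0 < c * q0 by rewrite mulr_gt0.
case: (eqVneq i j) => [->|ij].
  by rewrite subrr divr_ge0 ?(ltW cq0_gt0) // mulr_ge0 // addr_ge0.
rewrite ler_pdivlMr //; apply: le_trans (flow_bound j).
rewrite (bigD1 i) //= ler_wpDr //.
  apply: sumr_ge0 => k /andP[kj _]; rewrite !mulr_ge0 ?subr_ge0 ?j_max ?ltW //.
  exact: lt_le_trans q0_gt0 (Q_ge kj).
rewrite mulrC ler_wpM2r ?subr_ge0 ?j_max //.
by apply: ler_pM; rewrite ?ps_ge ?Q_ge //; apply: ltW.
Qed.

Theorem stationary_ratio_bound i :
  `|pi 0 i / ps i - 1| <= (m%:R + 1) * dl / (c * q0).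
Proof.
set t := (m%:R + 1) * dl / (c * q0).
case: (@arg_maxP _ _ _ i predT r isT) => j _ j_max.
have gap k : r j - r k <= t := max_ratio_gap k (fun k => j_max k isT).
have rj_ge1 : 1 <= r j.
  rewrite -ps_ratio_sum -[r j]mul1r -ps_sum1 mulr_suml.
  by apply: ler_sum => k _; rewrite ler_pM2l //; apply: j_max.
have rj_le : r j <= 1 + t.
  rewrite -lerBlDr -ps_ratio_sum -[r j - t]mul1r -ps_sum1 mulr_suml.
  by apply: ler_sum => k _; rewrite ler_pM2l //; have := gap k; lra.
have ri_le : r i <= r j := j_max i isT.
have ri_ge : r j - r i <= t := gap i.
by rewrite -/(r i) ler_norml; apply/andP; split; lra.
Qed.

End Perturbation.

Lemma norm_ln_le (R : realType) (x t : R) :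
  t <= 1/2 -> `|x - 1| <= t -> `|ln x| <= 2 * t.
Proof.
move=> t_le; rewrite !ler_norml => /andP[x_ge x_le].
have x_gt0 : 0 < x by lra.
have xV_gt0 : 0 < x^-1 by rewrite invr_gt0.
have ln_le : ln x <= x - 1.
  by have := @le_ln1Dx _ (x - 1); rewrite [1 + _]addrC subrK; apply; lra.
have lnV_le : ln x^-1 <= x^-1 - 1.
  by have := @le_ln1Dx _ (x^-1 - 1); rewrite [1 + _]addrC subrK; apply; lra.
have xxV : x * x^-1 = 1 by rewrite mulfV // gt_eqF.
rewrite lnV ?posrE // in lnV_le.
by apply/andP; split; nra.
Qed.

Section Softmax.
Variables (R : realType) (m : nat) (beta : 'I_m -> R).
Hypothesis m_gt0 : (0 < m)%N.

Definition softmax (i : 'I_m) : R := expR (beta i) / \sum_k expR (beta k).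

Lemma sum_expR_gt0 : 0 < \sum_k expR (beta k).
Proof.
rewrite (bigD1 (Ordinal m_gt0)) //= ltr_wpDr ?expR_gt0 //.
by apply: sumr_ge0 => k _; rewrite ltW ?expR_gt0.
Qed.

Lemma softmax_gt0 i : 0 < softmax i.
Proof. by rewrite divr_gt0 ?expR_gt0 ?sum_expR_gt0. Qed.

Lemma softmax_sum1 : \sum_i softmax i = 1.
Proof. by rewrite -mulr_suml mulfV // gt_eqF ?sum_expR_gt0. Qed.

Lemma ln_softmax i : ln (softmax i) = beta i - ln (\sum_k expR (beta k)).
Proof. by rewrite ln_div ?posrE ?expR_gt0 ?sum_expR_gt0 // expRK. Qed.

Hypothesis beta_sum0 : \sum_i beta i = 0.

Lemma spec_beta_subE (pi : 'rV[R]_m) i : (forall k, 0 < pi 0 k) ->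
  spec_beta pi i - beta i =
  ln (pi 0 i / softmax i) - m%:R^-1 * \sum_k ln (pi 0 k / softmax k).
Proof.
move=> pi_gt0; have lnE k : ln (pi 0 k / softmax k) =
    ln (pi 0 k) - beta k + ln (\sum_k expR (beta k)).
  by rewrite ln_div ?posrE ?softmax_gt0 // ln_softmax; ring.
rewrite /spec_beta lnE (eq_bigr _ (fun k _ => lnE k)) big_split sumrB /=.
rewrite beta_sum0 sumr_const card_ord -mulr_natr; field.
by rewrite pnatr_eq0 -lt0n.
Qed.

Lemma dist2_spec_beta_lt (pi : 'rV[R]_m) (t eps : R) :
  t <= 1/2 -> 16 * m%:R * t ^+ 2 < eps ^+ 2 -> 0 < eps ->
  (forall i, `|pi 0 i / softmax i - 1| <= t) ->
  (forall i, 0 < pi 0 i) /\ dist2 (spec_beta pi) beta < eps.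
Proof.
move=> t_le tm_lt eps_gt0 pi_near.
have ratio_gt0 i : 0 < pi 0 i / softmax i.
  by have := pi_near i; rewrite ler_norml => /andP[? ?]; lra.
have pi_gt0 i : 0 < pi 0 i.
  by have := ratio_gt0 i; rewrite pmulr_lgt0 ?invr_gt0 ?softmax_gt0.
split=> //; set L := fun k => ln (pi 0 k / softmax k).
have L_le k : `|L k| <= 2 * t by apply: norm_ln_le.
have mean_le : `|m%:R^-1 * \sum_k L k| <= 2 * t.
  rewrite normrM ger0_norm ?invr_ge0 // ler_pdivrMl ?ltr0n //.
  apply: le_trans (ler_norm_sum _ _ _) (le_trans (ler_sum _ (fun k _ => L_le k)) _).
  by rewrite sumr_const card_ord (mulr_natl (2 * t)).
have sq_le i : (spec_beta pi i - beta i) ^+ 2 <= 16 * t ^+ 2.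
  rewrite spec_beta_subE // -real_normK ?num_real //.
  have := le_trans (ler_normB _ _) (lerD (L_le i) mean_le).
  have := normr_ge0 (L i - m%:R^-1 * \sum_k L k); nra.
rewrite /dist2 -(ger0_norm (ltW eps_gt0)) -sqrtr_sqr ltr_sqrt ?exprn_gt0 //.
apply: le_lt_trans tm_lt; apply: le_trans (ler_sum _ (fun i _ => sq_le i)) _.
by rewrite sumr_const card_ord -(mulr_natr (16 * t ^+ 2)) mulrAC.
Qed.

End Softmax.

Definition assign_all (n m : nat) : {ffun 'I_n * 'I_m -> bool} := [ffun=> true].

Lemma spec_P_diag (R : realType) n m (p : R) (A X : {ffun 'I_n * 'I_m -> bool}) i :
  spec_P p A X i i = 1 - \sum_(k | k != i) spec_P p A X i k.
Proof.
rewrite /spec_P mxE eqxx; congr (_ - _); apply: eq_bigr => k ki.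
by rewrite mxE eq_sym (negbTE ki).
Qed.

Section MeanChain.
Variables (R : realType) (n m : nat) (theta : 'I_n -> R) (beta : 'I_m -> R).
Hypotheses (n_gt0 : (0 < n)%N) (m_gt0 : (0 < m)%N).

Let d : R := 3 / 2 * m%:R * n%:R.
Let d_gt0 : 0 < d. Proof. by rewrite !mulr_gt0 ?ltr0n. Qed.

Definition spec_Pstar (i j : 'I_m) : R :=
  (3 / 2 * m%:R * n%:R)^-1 * \sum_l pair_mean theta beta l i j.

Lemma spec_Pstar_ge (gamma0 : R) i j :
  (forall l, gamma0 <= pair_mean theta beta l i j) ->
  gamma0 / (3 / 2 * m%:R) <= spec_Pstar i j.
Proof.
move=> gamma_le; have -> : gamma0 / (3 / 2 * m%:R) = d^-1 * (n%:R * gamma0).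
  by rewrite /d; field; rewrite !pnatr_eq0 -!lt0n n_gt0 m_gt0.
rewrite ler_pM2l ?invr_gt0 //; apply: le_trans (ler_sum _ (fun l _ => gamma_le l)).
by rewrite sumr_const card_ord mulr_natl.
Qed.

Lemma softmax_spec_PstarC i j :
  softmax beta i * spec_Pstar i j = softmax beta j * spec_Pstar j i.
Proof.
set Z := \sum_k expR (beta k).
transitivity (Z^-1 * d^-1 * (expR (beta i) * \sum_l pair_mean theta beta l i j)).
  by rewrite /softmax /spec_Pstar; ring.
rewrite mulr_sumr (eq_bigr _ (fun l _ => expR_pair_meanC theta beta l i j)) -mulr_sumr.
by rewrite /softmax /spec_Pstar; ring.
Qed.

Lemma spec_P_subPstar X i j : i != j ->
  `|spec_P 1 (assign_all n m) X i j - spec_Pstar i j| = d^-1 * `|pair_dev theta beta i j X|.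
Proof.
move=> ij; rewrite /spec_P mxE (negbTE ij) expr1n mulr1 /spec_Pstar -mulrBr -sumrB.
rewrite normrM ger0_norm ?invr_ge0 ?(ltW d_gt0) //; congr (_ * `|_|).
by apply: eq_bigr => l _; rewrite !ffunE /pair_resp /b2R !mul1r.
Qed.

End MeanChain.

Section Consistency.
Variable R : realType.

Lemma exists_tolerance (m : nat) (eps : R) : 0 < eps ->
  exists2 t : R, 0 < t <= 1/2 & 16 * m%:R * t ^+ 2 < eps ^+ 2.
Proof.
move=> eps_gt0; set s := 2 * eps + 4 * (m%:R + 1).
have m_ge0 : 0 <= m%:R :> R := ler0n _ m.
have s_gt0 : 0 < s by rewrite /s; lra.
exists (eps / s); first by rewrite divr_gt0 //= ler_pdivrMr // /s; lra.
have -> : 16 * m%:R * (eps / s) ^+ 2 = eps ^+ 2 * (16 * m%:R / s ^+ 2).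
  by field; rewrite gt_eqF.
rewrite gtr_pMr ?exprn_gt0 // ltr_pdivrMr ?exprn_gt0 // mul1r /s; nra.
Qed.

Lemma success_of_small_dev m (beta : 'I_m -> R) (gamma0 eps : R) :
  (0 < m)%N -> \sum_i beta i = 0 -> 0 < gamma0 -> 0 < eps ->
  exists2 dl : R, 0 < dl & forall n (theta : 'I_n -> R) X, (0 < n)%N ->
    (forall l i j, i != j -> gamma0 <= pair_mean theta beta l i j) ->
    (forall i j, i != j -> `|pair_dev theta beta i j X| < n%:R * dl) ->
    success beta 1 eps (assign_all n m, X).
Proof.
move=> m_gt0 beta_sum0 gamma0_gt0 eps_gt0.
have [t /andP[t_gt0 t_le] tm_lt] := exists_tolerance m eps_gt0.
have [c c_gt0 c_le] : exists2 c, 0 < c & forall i, c <= softmax beta i.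
  exists (softmax beta [arg min_(i < Ordinal m_gt0) softmax beta i]%O).
    exact: softmax_gt0.
  by move=> i; case: arg_minP => // k _; apply.
set q0 := gamma0 / (3 / 2 * m%:R).
have q0_gt0 : 0 < q0 by rewrite /q0 divr_gt0 // mulr_gt0 ?ltr0n.
set dl := t * (c * q0) / (m%:R + 1).
have m1_gt0 : 0 < m%:R + 1 :> R by rewrite natr1 ltr0n.
have dl_gt0 : 0 < dl by rewrite /dl divr_gt0 // mulr_gt0 // mulr_gt0.
exists (3 / 2 * m%:R * dl); first by rewrite mulr_gt0 // mulr_gt0 ?ltr0n.
move=> n theta X n_gt0 gamma_le dev_lt pi pi_st.
have d_gt0 : 0 < 3 / 2 * m%:R * n%:R :> R by rewrite !mulr_gt0 ?ltr0n.
apply: (dist2_spec_beta_lt m_gt0 beta_sum0 t_le tm_lt eps_gt0) => i.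
have <- : (m%:R + 1) * dl / (c * q0) = t by rewrite /dl; field; rewrite !gt_eqF.
apply: (stationary_ratio_bound (P := spec_P 1 (assign_all n m) X)
                               (Q := spec_Pstar theta beta)) => //.
- exact: softmax_gt0.
- exact: softmax_sum1.
- by move=> i' j' ij; apply: spec_Pstar_ge => // l; apply: gamma_le.
- exact: softmax_spec_PstarC.
- exact: spec_P_diag.
- move=> i' j' ij; rewrite spec_P_subPstar // mulrC ler_pdivrMr //.
  have -> : dl * (3 / 2 * m%:R * n%:R) = n%:R * (3 / 2 * m%:R * dl) by ring.
  exact/ltW/dev_lt.
- exact: ltW.
Qed.

Lemma success_prob1E n m (theta : 'I_n -> R) (beta : 'I_m -> R) (eps : R) :
  success_prob theta beta 1 eps =
  expect (rasch_prob theta beta)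
    (fun X => if `[< success beta 1 eps (assign_all n m, X) >] then 1 else 0).
Proof.
have weight1 (A : {ffun 'I_n * 'I_m -> bool}) :
    \prod_(t : 'I_n * 'I_m) (if A t then 1 else 1 - 1) = (A == assign_all n m)%:R :> R.
  case: eqP => [->|A_ne]; first by rewrite big1 // => t _; rewrite ffunE.
  have [t At|A_all] := pickP (fun t => ~~ A t).
    by rewrite (bigD1 t) //= (negbTE At) subrr mul0r.
  by exfalso; apply/A_ne/ffunP => t; rewrite ffunE; have := A_all t; case: (A t).
pose F A X : R :=
  if `[< success beta 1 eps (A, X) >] then outcome_weight theta beta 1 (A, X) else 0.
rewrite /success_prob big_mkcond (eq_bigr (fun w => F w.1 w.2)); last by case.
rewrite -(pair_bigA _ F) (bigD1 (assign_all n m)) //= [X in _ + X]big1 ?addr0 => [|A A_ne].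
  apply: eq_bigr => X _; rewrite /F /outcome_weight /= weight1 eqxx mul1r.
  by case: ifP; rewrite ?mulr1 ?mulr0.
by apply: big1 => X _; rewrite /F /outcome_weight /= weight1 (negbTE A_ne) mul0r; case: ifP.
Qed.

Lemma success_prob_le1 n m (theta : 'I_n -> R) (beta : 'I_m -> R) (eps : R) :
  success_prob theta beta 1 eps <= 1.
Proof.
rewrite success_prob1E -[X in _ <= X](expect_cst (rasch_prob theta beta) 1).
by apply: ler_expect => [t|X]; [exact: rasch_prob_itv | case: ifP].
Qed.

Lemma success_prob_ge n m (theta : 'I_n -> R) (beta : 'I_m -> R) (eps dl : R) :
  (0 < n)%N -> 0 < dl ->
  (forall X, (forall i j, i != j -> `|pair_dev theta beta i j X| < n%:R * dl) ->
     success beta 1 eps (assign_all n m, X)) ->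
  1 - (m%:R / dl) ^+ 2 / n%:R <= success_prob theta beta 1 eps.
Proof.
move=> n_gt0 dl_gt0 small_success; set a := n%:R * dl.
have a_gt0 : 0 < a by rewrite mulr_gt0 ?ltr0n.
pose bad i j X : R := if (i != j) && (a <= `|pair_dev theta beta i j X|) then 1 else 0.
have bad_ge0 i j X : 0 <= bad i j X by rewrite /bad; case: ifP.
have union_bound X : 1 - \sum_i \sum_j bad i j X <=
    (if `[< success beta 1 eps (assign_all n m, X) >] then 1 else 0).
  have sum_ge0 : 0 <= \sum_i \sum_j bad i j X by do 2!(apply: sumr_ge0 => ? _).
  case: ifP => [_|/asboolPn fail]; first by rewrite lerBlDr lerDl.
  have [i [j /andP[ij a_le]]] : exists i j, (i != j) && (a <= `|pair_dev theta beta i j X|).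
    apply: contrapT => no_bad; apply: fail; apply: small_success => i j ij.
    by rewrite ltNge; apply/negP => a_le; apply: no_bad; exists i, j; rewrite ij.
  rewrite subr_le0 (bigD1 i) //= (bigD1 j) //= {1}/bad ij a_le -addrA lerDl.
  by rewrite addr_ge0 // sumr_ge0 // => *; apply: sumr_ge0.
have bad_le i j : expect (rasch_prob theta beta) (bad i j) <= n%:R / a ^+ 2.
  case: (eqVneq i j) => [<-|ij].
    rewrite (@eq_expect _ _ _ _ (fun=> 0)) => [|X]; last by rewrite /bad eqxx.
    by rewrite expect_cst divr_ge0 ?exprn_ge0 // ltW.
  rewrite (@eq_expect _ _ _ _ (fun X =>
      if a <= `|pair_dev theta beta i j X| then 1 else 0)).
    exact: chebyshev_pair_dev.
  by move=> X; rewrite /bad ij.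
rewrite success_prob1E.
apply: le_trans _ (ler_expect (rasch_prob_itv theta beta) union_bound).
rewrite expectB expect_cst expect_sum lerD2l lerN2.
under eq_bigr do rewrite expect_sum.
apply: le_trans (ler_sum _ (fun i _ => ler_sum _ (fun j _ => bad_le i j))) _.
rewrite !sumr_const !card_ord -mulrnA -(mulr_natr (n%:R / a ^+ 2)) natrM /a.
by rewrite [X in X <= _](_ : _ = (m%:R / dl) ^+ 2 / n%:R) //; field; rewrite !gt_eqF ?ltr0n.
Qed.

End Consistency.

Lemma cvg_to1_of_bounds (R : realType) (u : nat -> R) (K : R) :
  (forall n, (0 < n)%N -> 1 - K / n%:R <= u n <= 1) -> u @ \oo --> (1 : R).
Proof.
move=> u_bounds; apply/cvgrPdist_lt => e e_gt0; near=> n.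
have n_gt0 : (0 < n)%N by near: n; apply: nbhs_infty_gt.
have n_ge : ((Num.truncn (K / e)).+1 <= n)%N by near: n; apply: nbhs_infty_ge.
have /andP[u_ge u_le] := u_bounds n n_gt0.
have K_lt : K / n%:R < e.
  rewrite ltr_pdivrMr ?ltr0n // mulrC -ltr_pdivrMr //.
  by apply: lt_le_trans (truncnS_gt _) _; rewrite ler_nat.
by rewrite ger0_norm; lra.
Unshelve. all: by end_near.
Qed.

Unset Implicit Arguments.

Theorem mainTheorem3 (R : realType) (m : nat) (beta : 'I_m -> R)
  (theta : forall n : nat, 'I_n -> R) (gamma0 : R) :
  (2 <= m)%N ->
  \sum_(i < m) beta i = 0 ->
  0 < gamma0 ->
  (forall (n : nat) (l : 'I_n) (i j : 'I_m), i != j ->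
      gamma0 <= pair_mean (theta n) beta l i j) ->
  forall eps : R, 0 < eps ->
  (fun n : nat => success_prob (theta n) beta 1 eps) @ \oo --> (1 : R).
Proof.
move=> m_ge2 beta_sum0 gamma0_gt0 gamma_le eps eps_gt0.
have m_gt0 : (0 < m)%N by exact: leq_trans m_ge2.
have [dl dl_gt0 small_dev_success] :=
  success_of_small_dev m_gt0 beta_sum0 gamma0_gt0 eps_gt0.
apply: (@cvg_to1_of_bounds _ _ ((m%:R / dl) ^+ 2)) => n n_gt0.
rewrite success_prob_le1 andbT; apply: success_prob_ge => // X.
by apply: small_dev_success => // l; apply: gamma_le.
Qed.
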